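(* In the setup below, every element $R(i;j,k\,|\,l;m,n)$ (with $i\neq l$) and every element $T(i,j\,|\,k,l\,|\,m,n)$ (with $i,k,m$ pairwise distinct) lies in $K_2^T(C)$.
   Context: Let $K$ be a field, $N\ge2$, $N_1,\dots,N_N\ge1$. For $1\le i\le N$, $1\le j\le N_i$ let $L_{i,j}=a_ix+b_iy+c_{i,j}$ with $a_i,b_i,c_{i,j}\in K$, $(a_i,b_i)\ne(0,0)$, such that the affine lines $L_{i,j}=0$ are pairwise distinct and $[i,k]:=a_ib_k-a_kb_i\neq0$ for $i\neq k$. For $\lambda\in K^*$ put $f(x,y)=\lambda\prod_{i,j}L_{i,j}-1$; the affine curve $f=0$ is irreducible. Let $C'\subset\mathbb P^2_K$ be its projective closure, $C$ the normalisation of $C'$ (a regular proper irreducible curve), and $F$ its function field; the $L_{i,j}$ are regarded as elements of $F^*$. $K_2(F)$ is the abelian group generated by symbols $\{a,b\}$, $a,b\in F^*$, with relations $\{a_1a_2,b\}=\{a_1,b\}+\{a_2,b\}$, $\{a,b_1b_2\}=\{a,b_1\}+\{a,b_2\}$, $\{a,1-a\}=0$ for $a\neq0,1$. For a closed point $x$ of $C$ with residue field $k(x)$, the tame symbol is $T_x(\{a,b\})=(-1)^{\mathrm{ord}_x(a)\mathrm{ord}_x(b)}\bigl(a^{\mathrm{ord}_x(b)}/b^{\mathrm{ord}_x(a)}\bigr)(x)\in k(x)^*$, and $K_2^T(C)$ is the kernel of $\bigoplus_x T_x:K_2(F)\to\bigoplus_x k(x)^*$. Define $R(i;j,k\,|\,l;m,n)=\{L_{i,j}/L_{i,k},\,L_{l,m}/L_{l,n}\}$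 for $i\ne l$, and $T(i,j\,|\,k,l\,|\,m,n)=\Bigl\{\frac{[i,m]}{[k,m]}\frac{L_{k,l}}{L_{i,j}},\,\frac{[i,k]}{[m,k]}\frac{L_{m,n}}{L_{i,j}}\Bigr\}$ for $i,k,m$ pairwise distinct (second indices in the appropriate ranges). *)

From HB Require Import structures.
From mathcomp Require Import all_boot all_order all_algebra.
Set Implicit Arguments. Unset Strict Implicit. Unset Printing Implicit Defensive.
Import Order.TTheory GRing.Theory Num.Theory.
Local Open Scope ring_scope.

(* Polynomials in two variables over K: {poly {poly K}}; the inner variable is
   X = ('X : {poly K})%:P, the outer variable is Y = 'X. *)
Definition polyX2 (K : fieldType) : {poly {poly K}} := ('X : {poly K})%:P.
Definition polyY2 (K : fieldType) : {poly {poly K}} := 'X.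
Definition polyC2 (K : fieldType) (c : K) : {poly {poly K}} := c%:P%:P.

Definition ev2 (K : fieldType) (F : fieldType) (iota : {rmorphism K -> F})
  (x y : F) (p : {poly {poly K}}) : F :=
  (map_poly (fun q : {poly K} => (map_poly iota q).[x]) p).[y].

Definition Lpoly (K : fieldType) (a b c : K) : {poly {poly K}} :=
  polyC2 a * polyX2 K + polyC2 b * polyY2 K + polyC2 c.

Definition fpoly (K : fieldType) (N : nat) (Ns : 'I_N -> nat)
  (a b : 'I_N -> K) (c : forall i : 'I_N, 'I_(Ns i) -> K) (lam : K)
  : {poly {poly K}} :=
  polyC2 lam * (\prod_(i < N) \prod_(j < Ns i) Lpoly (a i) (b i) (c i j)) - 1.

(* F (with K -> F and elements x, y) is the function field of the affine curve
   f = 0, i.e. F = Frac(K[X,Y]/(f)) with x, y the classes of X, Y: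
   the kernel of K[X,Y] -> F, p |-> p(x,y) is exactly (f), and F is generated
   as a field by the image. *)
Definition is_function_field (K F : fieldType) (iota : {rmorphism K -> F})
  (x y : F) (f : {poly {poly K}}) : Prop :=
  (forall p : {poly {poly K}}, ev2 iota x y p = 0 <-> exists g, p = f * g) /\
  (forall z : F, exists p q : {poly {poly K}},
      ev2 iota x y q != 0 /\ z = ev2 iota x y p / ev2 iota x y q).

(* Normalised discrete valuation of F, trivial on K (= closed point of the
   regular proper model C of F). The value at 0 is irrelevant. *)
Definition is_Kdval (K F : fieldType) (iota : {rmorphism K -> F})
  (v : F -> int) : Prop :=
  [/\ (forall u w : F, u != 0 -> w != 0 -> v (u * w) = v u + v w),
      (forall u w : F, u != 0 -> w != 0 -> u + w != 0 ->
         Num.min (v u) (v w) <= v (u + w)),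
      (forall c : K, c != 0 -> v (iota c) = 0)
    & exists t : F, t != 0 /\ v t = 1].

Definition inO (F : fieldType) (v : F -> int) (u : F) : Prop := u = 0 \/ 0 <= v u.

(* res : O_v -> k is a ring morphism with kernel the maximal ideal, i.e. it
   induces an embedding of the residue field k(v) = O_v / m_v into k. *)
Definition is_residue (F k : fieldType) (v : F -> int) (res : F -> k) : Prop :=
  [/\ (forall u w, inO v u -> inO v w -> res (u + w) = res u + res w),
      (forall u w, inO v u -> inO v w -> res (u * w) = res u * res w),
      res 1 = 1
    & (forall u, inO v u -> (res u = 0 <-> (u = 0 \/ 0 < v u)))].

Definition tame_trivial (F k : fieldType) (v : F -> int) (res : F -> k)
  (u w : F) : Prop :=
  res ((-1) ^ (v u * v w) * (u ^ (v w) / w ^ (v u))) = 1.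

Definition in_K2T (K F : fieldType) (iota : {rmorphism K -> F}) (u w : F) : Prop :=
  forall v : F -> int, is_Kdval iota v ->
  forall (k : fieldType) (res : F -> k), is_residue v res ->
  tame_trivial v res u w.

Definition brk (K : fieldType) (N : nat) (a b : 'I_N -> K) (i k : 'I_N) : K :=
  a i * b k - a k * b i.

Definition Lel (K F : fieldType) (iota : {rmorphism K -> F}) (x y : F)
  (ai bi cij : K) : F := iota ai * x + iota bi * y + iota cij.

From HB Require Import structures.
From mathcomp Require Import all_boot all_order all_algebra.
From mathcomp Require Import zify ring.
Import Order.TTheory GRing.Theory Num.Theory.
Local Open Scope ring_scope.
Set Implicit Arguments. Unset Strict Implicit.

(* On the curve [lam * prod L_{i,j} = 1] every L_{i,j} is a unit of the affine
   coordinate ring.  Hence at a place v either all L_{i,j} are v-units (as soon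
   as two L's of independent directions are integral, all of them are, by
   Cramer's rule, and their valuations sum to 0), or some L_{i,j} has a pole.
   For R: a pole of L_{i,k} makes L_{i,j}/L_{i,k} = 1 + const/L_{i,k} a
   principal unit, whose tame symbol with anything is trivial.
   For T: the linear relation between three directions gives
   u + w = 1 - const/L_{i,j}; when some L has a pole the error term is small
   compared with 1, u and w, and the Steinberg relation survives. *)

(* [s = 0] is allowed separately since [v 0] is a junk value. *)
Definition dval_ge (F : fieldType) (v : F -> int) (r : int) (s : F) : Prop :=
  s = 0 \/ r <= v s.

Section DiscreteValuation.
Variables (K F : fieldType) (iota : {rmorphism K -> F}) (v : F -> int).
Hypothesis hv : is_Kdval iota v.

Lemma dvalM (u w : F) : u != 0 -> w != 0 -> v (u * w) = v u + v w.
Proof. by case: hv => h _ _ _; apply: h. Qed.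

Lemma dvalC (c : K) : c != 0 -> v (iota c) = 0.
Proof. by case: hv => _ _ h _; apply: h. Qed.

Lemma dval1 : v 1 = 0.
Proof. by rewrite -(rmorph1 iota) dvalC ?oner_neq0. Qed.

Lemma dval_mulC (c : K) (u : F) : c != 0 -> u != 0 -> v (iota c * u) = v u.
Proof. by move=> c0 u0; rewrite dvalM ?fmorph_eq0 // dvalC ?add0r. Qed.

Lemma dvalN (u : F) : u != 0 -> v (- u) = v u.
Proof.
move=> u0; rewrite -mulN1r -(rmorphN1 iota) dval_mulC //.
by rewrite oppr_eq0 oner_neq0.
Qed.

Lemma dvalN1 : v (-1) = 0.
Proof. by rewrite dvalN ?oner_neq0 ?dval1. Qed.

Lemma dvalV (u : F) : u != 0 -> v u^-1 = - v u.
Proof.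
move=> u0; apply: (addrI (v u)); rewrite subrr -dvalM ?invr_neq0 //.
by rewrite mulfV // dval1.
Qed.

Lemma dval_div (u w : F) : u != 0 -> w != 0 -> v (u / w) = v u - v w.
Proof. by move=> u0 w0; rewrite dvalM ?invr_neq0 // dvalV. Qed.

Lemma dval_prod (I : finType) (f : I -> F) :
  (forall i, f i != 0) -> v (\prod_i f i) = \sum_i v (f i).
Proof.
move=> f0; apply: (proj2 (big_rec2 (fun p s => p != 0 /\ v p = s) _ _)).
  by rewrite oner_neq0 dval1.
by move=> i p s _ [p0 <-]; rewrite mulf_neq0 // dvalM.
Qed.

Lemma dval_ge_le (r r' : int) (s : F) : r' <= r -> dval_ge v r s -> dval_ge v r' s.
Proof. by move=> rr' [->|h]; [left|right; apply: le_trans h]. Qed.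

Lemma dval_geD (r : int) (s1 s2 : F) :
  dval_ge v r s1 -> dval_ge v r s2 -> dval_ge v r (s1 + s2).
Proof.
case=> [->|h1]; first by rewrite add0r.
case=> [->|h2]; first by rewrite addr0; right.
have [->|s10] := eqVneq s1 0; first by rewrite add0r; right.
have [->|s20] := eqVneq s2 0; first by rewrite addr0; right.
have [->|s0] := eqVneq (s1 + s2) 0; first by left.
right; case: hv => _ hmin _ _; apply: le_trans (hmin _ _ s10 s20 s0).
by rewrite le_min h1 h2.
Qed.

Lemma dval_ge0C (c : K) : dval_ge v 0 (iota c).
Proof.
have [->|c0] := eqVneq c 0; first by left; rewrite rmorph0.
by right; rewrite dvalC.
Qed.

Lemma dval_ge_mulC (r : int) (c : K) (s : F) : dval_ge v r s -> dval_ge v r (iota c * s).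
Proof.
have [->|c0] := eqVneq c 0; first by left; rewrite rmorph0 mul0r.
have [->|s0] := eqVneq s 0; first by left; rewrite mulr0.
by case=> [s0'|h]; [rewrite s0' eqxx in s0 | right; rewrite dval_mulC].
Qed.

Lemma dval_geN (r : int) (s : F) : dval_ge v r s -> dval_ge v r (- s).
Proof. by move=> h; rewrite -mulN1r -(rmorphN1 iota); apply: dval_ge_mulC. Qed.

Lemma dval_ge_div (r : int) (s z : F) :
  z != 0 -> dval_ge v r s -> dval_ge v (r - v z) (s / z).
Proof.
move=> z0 [->|h]; first by left; rewrite mul0r.
have [->|s0] := eqVneq s 0; first by left; rewrite mul0r.
by right; rewrite dval_div // lerB.
Qed.

Lemma dval_add_dominant (a s : F) (r : int) :
  a != 0 -> dval_ge v r s -> v a < r -> a + s != 0 /\ v (a + s) = v a.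
Proof.
move=> a0 [->|hs] ltar; first by rewrite addr0.
have [->|s0] := eqVneq s 0; first by rewrite addr0.
have ltas : v a < v s by apply: lt_le_trans hs.
have as0 : a + s != 0.
  apply: contraTneq ltas => /eqP; rewrite addr_eq0 => /eqP->.
  by rewrite dvalN // ltxx.
split=> //; case: hv => _ hmin _ _.
have ge1 := hmin _ _ a0 s0 as0.
have ge2 : Num.min (v (a + s)) (v (- s)) <= v a.
  by rewrite -[in v a](addrK s a); apply: hmin; rewrite ?oppr_eq0 ?addrK.
rewrite dvalN // in ge2; lia.
Qed.

Section Residue.
Variables (k : fieldType) (res : F -> k).
Hypothesis hres : is_residue v res.

Lemma res0 : res 0 = 0.
Proof. by case: hres => _ _ _ h; apply/(h 0); left. Qed.

Lemma resD (u w : F) : dval_ge v 0 u -> dval_ge v 0 w -> res (u + w) = res u + res w.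
Proof. by case: hres => h _ _ _; apply: h. Qed.

Lemma resM (u w : F) : dval_ge v 0 u -> dval_ge v 0 w -> res (u * w) = res u * res w.
Proof. by case: hres => _ h _ _; apply: h. Qed.

Lemma res1 : res 1 = 1.
Proof. by case: hres. Qed.

Lemma resN1 : res (-1) = -1.
Proof.
have h : res (1 + -1) = res 1 + res (-1).
  by apply: resD; right; rewrite ?dval1 ?dvalN1.
by apply/eqP; rewrite -addr_eq0 addrC -{1}res1 -h subrr res0.
Qed.

Lemma res_dval_gt0 (t : F) : dval_ge v 1 t -> res t = 0.
Proof.
move=> ht; case: hres => _ _ _ hker; apply/hker; first exact: dval_ge_le ht.
by case: ht => [->|ht]; [left|right; apply: lt_le_trans ht].
Qed.

Lemma res_add_small (e t : F) : e != 0 -> v e = 0 -> dval_ge v 1 t ->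
  [/\ e + t != 0, v (e + t) = 0 & res (e + t) = res e].
Proof.
move=> e0 ve ht; have ve_lt1 : v e < 1 by rewrite ve.
have [et0 vet] := dval_add_dominant e0 ht ve_lt1.
have ge0e : dval_ge v 0 e by right; rewrite ve.
by split; rewrite ?vet // resD ?(res_dval_gt0 ht) ?addr0 //; apply: dval_ge_le ht.
Qed.

Lemma resV (z : F) : z != 0 -> v z = 0 -> res z^-1 = (res z)^-1.
Proof.
move=> z0 vz; have rzV : res z * res z^-1 = 1.
  by rewrite -resM ?mulfV ?res1 //; right; rewrite ?dvalV // vz.
have rz0 : res z != 0.
  by apply: contra_eq_neq rzV => ->; rewrite mul0r eq_sym oner_neq0.
by rewrite -[LHS]mul1r -(mulVf rz0) -mulrA rzV mulr1.
Qed.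

Lemma res_exprz (z : F) (n : int) : z != 0 -> v z = 0 ->
  [/\ z ^ n != 0, v (z ^ n) = 0 & res (z ^ n) = res z ^ n].
Proof.
move=> z0 vz; have resX m : [/\ z ^+ m != 0, v (z ^+ m) = 0 & res (z ^+ m) = res z ^+ m].
  elim: m => [|m [zm0 vzm rzm]]; first by rewrite !expr0 oner_neq0 dval1 res1.
  by rewrite !exprS mulf_neq0 // dvalM // vz vzm resM ?rzm //; right; rewrite ?vz ?vzm.
case: n => m; first exact: resX.
have [zm0 vzm rzm] := resX m.+1.
by rewrite /exprz invr_neq0 // dvalV // vzm oppr0 resV // rzm.
Qed.

Lemma tame_trivial_units (u w : F) : v u = 0 -> v w = 0 -> tame_trivial v res u w.
Proof.
by move=> vu vw; rewrite /tame_trivial vu vw mulr0 !expr0z mul1r divr1 res1.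
Qed.

Lemma tame_trivial_1l (u w : F) :
  u != 0 -> v u = 0 -> res u = 1 -> tame_trivial v res u w.
Proof.
move=> u0 vu ru; rewrite /tame_trivial vu mul0r !expr0z mul1r divr1.
by have [_ _ ->] := res_exprz (v w) u0 vu; rewrite ru exp1rz.
Qed.

Lemma tame_trivial_1r (u w : F) :
  w != 0 -> v w = 0 -> res w = 1 -> tame_trivial v res u w.
Proof.
move=> w0 vw rw; rewrite /tame_trivial vw mulr0 !expr0z mul1r div1r.
have [wn0 vwn rwn] := res_exprz (v u) w0 vw.
by rewrite resV // rwn rw exp1rz invr1.
Qed.

Lemma tame_trivial_neg1 (u w t : F) : u != 0 -> w != 0 -> v u = v w ->
  u / w = -1 + t -> dval_ge v 1 t -> tame_trivial v res u w.
Proof.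
move=> u0 w0 vuw uw ht; rewrite /tame_trivial vuw.
have N10 : (-1 : F) != 0 by rewrite oppr_eq0 oner_neq0.
have [q0 vq rq] := res_add_small N10 dvalN1 ht.
rewrite -uw resN1 in q0 vq rq.
rewrite invr_expz -exprz_inv -expfzMl.
have [s0 vs rs] := res_exprz (v w * v w) N10 dvalN1.
have [p0 vp rp] := res_exprz (v w) q0 vq.
rewrite resM; last 2 first.
- by right; rewrite vs.
- by right; rewrite vp.
rewrite rs rp rq resN1 -exprz_exp.
have : (-1 : k) ^ v w = 1 \/ (-1 : k) ^ v w = -1.
  case: (v w) => n; rewrite /exprz -signr_odd; case: (odd _);
  rewrite ?expr1 ?expr0 ?invrN ?invr1; by [left|right].
by case=> h; rewrite h ?exp1rz ?mulr1 // h mulN1r opprK.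
Qed.

(* The Steinberg relation {u, 1 - u} = 0, perturbed by a term d that is small
   compared with u, w and 1. *)
Lemma tame_trivial_sum1 (u w d : F) : u != 0 -> w != 0 -> u + w + d = 1 ->
  dval_ge v (Num.min 0 (Num.min (v u) (v w)) + 1) d -> tame_trivial v res u w.
Proof.
move=> u0 w0 uwd hd.
have unit1 z t : z = 1 + t -> dval_ge v 1 t -> [/\ z != 0, v z = 0 & res z = 1].
  by move=> -> ht; have [] := res_add_small (oner_neq0 F) dval1 ht; rewrite res1.
have [min_ge0|min_lt0] := lerP 0 (Num.min (v u) (v w)).
  have hd1 : dval_ge v 1 d by apply: dval_ge_le hd; lia.
  have [vu_gt0|vu_le0] := ltrP 0 (v u).
    have ew : w = 1 + - (u + d) by rewrite -uwd; ring.
    have ht : dval_ge v 1 (- (u + d)) by apply/dval_geN/dval_geD => //; right.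
    have [w1 vw0 rw] := unit1 _ _ ew ht.
    exact: tame_trivial_1r.
  have [vw_gt0|vw_le0] := ltrP 0 (v w).
    have eu : u = 1 + - (w + d) by rewrite -uwd; ring.
    have ht : dval_ge v 1 (- (w + d)) by apply/dval_geN/dval_geD => //; right.
    have [u1 vu0 ru] := unit1 _ _ eu ht.
    exact: tame_trivial_1l.
  by apply: tame_trivial_units; lia.
have {}uwd : u + w = 1 - d by rewrite -uwd addrK.
have sum_ge : dval_ge v (Num.min (v u) (v w) + 1) (u + w).
  rewrite uwd; apply: dval_geD; first by right; rewrite dval1; lia.
  by apply/dval_geN; apply: dval_ge_le hd; lia.
have no_dominant p q : p != 0 -> v p < v q -> dval_ge v (v p + 1) (p + q) -> False.
  move=> p0 ltpq; have [pq0 vpq] := dval_add_dominant p0 (or_intror (lexx _)) ltpq.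
  by case=> [/eqP|]; rewrite ?(negPf pq0) // vpq; lia.
have vuw : v u = v w.
  have [ltuw|ltwu|//] := ltgtP (v u) (v w).
    by case: (no_dominant u w u0 ltuw); apply: dval_ge_le sum_ge; lia.
  by case: (no_dominant w u w0 ltwu); rewrite [w + u]addrC; apply: dval_ge_le sum_ge; lia.
apply: (tame_trivial_neg1 u0 w0 vuw (t := (u + w) / w)).
  by rewrite mulrDl mulfV // addrC addrK.
by apply: dval_ge_le (dval_ge_div w0 sum_ge); lia.
Qed.

End Residue.
End DiscreteValuation.

Lemma ev2_fpoly (K F : fieldType) (iota : {rmorphism K -> F}) (x y : F)
    (N : nat) (Ns : 'I_N -> nat) (a b : 'I_N -> K)
    (c : forall i : 'I_N, 'I_(Ns i) -> K) (lam : K) :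
  ev2 iota x y (@fpoly K N Ns a b c lam) =
  iota lam * (\prod_(i < N) \prod_(j < Ns i) Lel iota x y (a i) (b i) (c i j)) - 1.
Proof.
have cfx : commr_rmorph iota x by move=> z; exact: mulrC.
have cfy : commr_rmorph (horner_morph cfx) y by move=> z; exact: mulrC.
rewrite [LHS](_ : _ = horner_morph cfy (@fpoly K N Ns a b c lam)) //.
rewrite /fpoly rmorphB rmorph1 rmorphM rmorph_prod /polyC2 /= !horner_morphC.
congr (_ * _ - _); first exact: horner_morphC.
apply: eq_bigr => i _; rewrite rmorph_prod; apply: eq_bigr => j _.
rewrite /Lpoly /polyC2 /polyX2 /polyY2 !rmorphD !rmorphM /= !horner_morphC.
by rewrite /Lel; congr (_ * _ + _ * _ + _); first [exact: horner_morphC | exact: horner_morphX].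
Qed.

Section LinearForms.
Variables (K F : fieldType) (iota : {rmorphism K -> F}) (x y : F).
Variables (N : nat) (Ns : 'I_N -> nat) (a b : 'I_N -> K) (lam : K).
Variable c : forall i : 'I_N, 'I_(Ns i) -> K.
Arguments c : clear implicits.
Local Notation L i j := (Lel iota x y (a i) (b i) (c i j)).

Lemma Lel_subr (i : 'I_N) (j k : 'I_(Ns i)) : L i j - L i k = iota (c i j - c i k).
Proof. by rewrite /Lel rmorphB; ring. Qed.

(* Cramer's rule for the linear parts of three lines in the plane. *)
Lemma Lel_brk_relation (p q r : 'I_N) (j : 'I_(Ns p)) (l : 'I_(Ns q)) (n : 'I_(Ns r)) :
  iota (brk a b r q) * L p j + iota (brk a b p r) * L q l - iota (brk a b p q) * L r n
  = iota (brk a b r q * c p j + brk a b p r * c q l - brk a b p q * c r n).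
Proof. by rewrite /Lel /brk !(rmorphB, rmorphD, rmorphM); ring. Qed.

Hypothesis hprod : iota lam * (\prod_(i < N) \prod_(j < Ns i) L i j) = 1.
Hypothesis hbrk : forall i k : 'I_N, i != k -> brk a b i k != 0.

Lemma Lel_neq0 (i : 'I_N) (j : 'I_(Ns i)) : L i j != 0.
Proof.
apply: contra_eq_neq hprod => Lij0.
by rewrite (bigD1 i) //= (bigD1 j) //= Lij0 !mul0r mulr0 eq_sym oner_neq0.
Qed.

Section Valuation.
Variable v : F -> int.
Hypothesis hv : is_Kdval iota v.

Lemma Lel_dval_ge0 (i k : 'I_N) (j : 'I_(Ns i)) (l : 'I_(Ns k)) :
  i != k -> dval_ge v 0 (L i j) -> dval_ge v 0 (L k l) ->
  forall (p : 'I_N) (q : 'I_(Ns p)), 0 <= v (L p q).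
Proof.
move=> ik hij hkl p q.
have : dval_ge v 0 (L p q).
  rewrite (_ : L p q = iota (brk a b i k)^-1 *
      (iota (brk a b p k) * L i j + iota (brk a b i p) * L k l
       - iota (brk a b p k * c i j + brk a b i p * c k l - brk a b i k * c p q))).
    apply: (dval_ge_mulC hv); apply: (dval_geD hv); last first.
      exact/(dval_geN hv)/(dval_ge0C hv).
    by apply: (dval_geD hv); apply: (dval_ge_mulC hv).
  by rewrite -Lel_brk_relation fmorphV; field; rewrite fmorph_eq0 hbrk.
by case=> // /eqP; rewrite (negPf (Lel_neq0 q)).
Qed.

Lemma Lel_dval_eq0 (i k : 'I_N) (j : 'I_(Ns i)) (l : 'I_(Ns k)) :
  i != k -> dval_ge v 0 (L i j) -> dval_ge v 0 (L k l) ->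
  forall (p : 'I_N) (q : 'I_(Ns p)), v (L p q) = 0.
Proof.
move=> ik hij hkl; have ge0 := Lel_dval_ge0 ik hij hkl.
have lam0 : lam != 0.
  by apply: contra_eq_neq hprod => ->; rewrite rmorph0 mul0r eq_sym oner_neq0.
have prod_neq0 p : \prod_(q < Ns p) L p q != 0.
  by apply/prodf_neq0 => q _; apply: Lel_neq0.
have sum0 : \sum_(p < N) \sum_(q < Ns p) v (L p q) = 0.
  have := congr1 v hprod; rewrite (dval1 hv) (dval_mulC hv) ?(dval_prod hv) //.
    by under eq_bigr do rewrite (dval_prod hv (fun q => Lel_neq0 q)).
  by apply/prodf_neq0.
move=> p q.
have sum_p0 : \sum_(q < Ns p) v (L p q) = 0.
  exact: psumr_eq0P (fun p' _ => sumr_ge0 _ (fun q' _ => ge0 p' q')) sum0 p isT.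
exact: psumr_eq0P (fun q' _ => ge0 p q') sum_p0 q isT.
Qed.

Section Residue.
Variables (kappa : fieldType) (res : F -> kappa).
Hypothesis hres : is_residue v res.

Lemma Lel_ratio_principal (i : 'I_N) (j n : 'I_(Ns i)) : v (L i n) < 0 ->
  [/\ L i j / L i n != 0, v (L i j / L i n) = 0 & res (L i j / L i n) = 1].
Proof.
move=> vin_lt0.
have -> : L i j / L i n = 1 + iota (c i j - c i n) / L i n.
  by rewrite -Lel_subr mulrBl mulfV ?Lel_neq0 // addrC subrK.
have ht : dval_ge v 1 (iota (c i j - c i n) / L i n).
  by apply: dval_ge_le (dval_ge_div hv (Lel_neq0 n) (dval_ge0C hv _)); lia.
have [t0 vt rt] := res_add_small hv hres (oner_neq0 F) (dval1 hv) ht.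
by split; rewrite // rt (res1 hres).
Qed.

Lemma tame_trivial_R (i : 'I_N) (j k : 'I_(Ns i)) (l : 'I_N) (m n : 'I_(Ns l)) :
  i != l -> tame_trivial v res (L i j / L i k) (L l m / L l n).
Proof.
move=> il.
have [vik_lt0|vik_ge0] := ltrP (v (L i k)) 0.
  by have [? ? ?] := Lel_ratio_principal j vik_lt0; apply: (tame_trivial_1l hv hres).
have [vln_lt0|vln_ge0] := ltrP (v (L l n)) 0.
  by have [? ? ?] := Lel_ratio_principal m vln_lt0; apply: (tame_trivial_1r hv hres).
have vL0 := Lel_dval_eq0 il (or_intror vik_ge0) (or_intror vln_ge0).
by apply: (tame_trivial_units hres); rewrite (dval_div hv) ?Lel_neq0 // !vL0 subrr.
Qed.

Lemma tame_trivial_T (i : 'I_N) (j : 'I_(Ns i)) (k : 'I_N) (l : 'I_(Ns k))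
    (m : 'I_N) (n : 'I_(Ns m)) : i != k -> k != m -> i != m ->
  tame_trivial v res (iota (brk a b i m / brk a b k m) * L k l / L i j)
                     (iota (brk a b i k / brk a b m k) * L m n / L i j).
Proof.
move=> ik km im.
have bmk : brk a b m k != 0 by rewrite hbrk // eq_sym.
have bkm : brk a b k m = - brk a b m k by rewrite /brk; ring.
have quot_neq0 (A : K) (p : 'I_N) (q : 'I_(Ns p)) :
    A != 0 -> iota A * L p q / L i j != 0.
  by move=> A0; rewrite !mulf_neq0 ?invr_neq0 ?fmorph_eq0 ?Lel_neq0.
have dval_quot (A : K) (p : 'I_N) (q : 'I_(Ns p)) :
    A != 0 -> v (iota A * L p q / L i j) = v (L p q) - v (L i j).
  move=> A0; have LA : iota A * L p q != 0 by rewrite mulf_neq0 ?fmorph_eq0 ?Lel_neq0.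
  by rewrite (dval_div hv) ?Lel_neq0 // (dval_mulC hv) ?Lel_neq0.
have A0 : brk a b i m / brk a b k m != 0.
  by rewrite mulf_neq0 ?invr_neq0 //; apply: hbrk.
have B0 : brk a b i k / brk a b m k != 0.
  by rewrite mulf_neq0 ?invr_neq0 //; apply: hbrk.
set u := _ * L k l / _; set w := _ * L m n / _.
have u0 : u != 0 by exact: quot_neq0.
have w0 : w != 0 by exact: quot_neq0.
have sum1 : u + w + (iota (brk a b m k) * L i j + iota (brk a b i m) * L k l
    - iota (brk a b i k) * L m n) / (iota (brk a b m k) * L i j) = 1.
  rewrite /u /w !fmorph_div bkm rmorphN; field.
  by rewrite oppr_eq0 fmorph_eq0 bmk Lel_neq0.
rewrite Lel_brk_relation in sum1.
have [XY_ge0|XY_lt0] := boolP ((0 <= v (L i j)) && (0 <= v (L k l))).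
  case/andP: XY_ge0 => hij hkl.
  have vL0 := Lel_dval_eq0 ik (or_intror hij) (or_intror hkl).
  by apply: (tame_trivial_units hres); rewrite /u /w !dval_quot // !vL0 subrr.
apply: (tame_trivial_sum1 hv hres u0 w0 sum1).
move: (_ * c i j + _ - _) => C; have [->|C0] := eqVneq C 0.
  by left; rewrite rmorph0 mul0r.
have bmk0 : iota (brk a b m k) != 0 by rewrite fmorph_eq0.
right; rewrite (dval_div hv) ?mulf_neq0 ?fmorph_eq0 ?Lel_neq0 //.
rewrite (dvalM hv) ?Lel_neq0 // !(dvalC hv) // /u /w !dval_quot //.
by move: XY_lt0; rewrite negb_and -!ltNge; lia.
Qed.

End Residue.
End Valuation.
End LinearForms.

Unset Implicit Arguments.
Set Strict Implicit.

Theorem lemma2p2 (K : fieldType) (N : nat) (Ns : 'I_N -> nat)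
  (a b : 'I_N -> K) (c : forall i : 'I_N, 'I_(Ns i) -> K) (lam : K)
  (hN : (2 <= N)%N)
  (hNs : forall i, (1 <= Ns i)%N)
  (hab : forall i, (a i, b i) != (0, 0))
  (hdistinct : forall (i : 'I_N) (j : 'I_(Ns i)) (i' : 'I_N) (j' : 'I_(Ns i')),
      (i != i' \/ nat_of_ord j != nat_of_ord j') ->
      ~ (exists mu : K, [/\ mu != 0, a i' = mu * a i, b i' = mu * b i
                          & c i' j' = mu * c i j]))
  (hbrk : forall i k : 'I_N, i != k -> brk a b i k != 0)
  (hlam : lam != 0)
  (F : fieldType) (iota : {rmorphism K -> F}) (x y : F)
  (hF : is_function_field iota x y (@fpoly K N Ns a b c lam)) :
  let L := fun (i : 'I_N) (j : 'I_(Ns i)) => Lel iota x y (a i) (b i) (c i j) in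
  (forall (i : 'I_N) (j k : 'I_(Ns i)) (l : 'I_N) (m n : 'I_(Ns l)),
      i != l -> in_K2T iota (L i j / L i k) (L l m / L l n)) /\
  (forall (i : 'I_N) (j : 'I_(Ns i)) (k : 'I_N) (l : 'I_(Ns k))
          (m : 'I_N) (n : 'I_(Ns m)),
      i != k -> k != m -> i != m ->
      in_K2T iota (iota (brk a b i m / brk a b k m) * L k l / L i j)
                  (iota (brk a b i k / brk a b m k) * L m n / L i j)).
Proof.
(* hN, hNs, hab, hdistinct and hlam only serve to make f irreducible, which hF
   already presupposes. *)
move=> L; rewrite {}/L.
have hprod :
    iota lam * (\prod_(i < N) \prod_(j < Ns i) Lel iota x y (a i) (b i) (c i j)) = 1.
  apply/eqP; rewrite -subr_eq0 -ev2_fpoly; apply/eqP/(proj1 hF).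
  by exists 1; rewrite mulr1.
split=> [i j k l m n il | i j k l m n ik km im] v hv kappa res hres.
- exact (tame_trivial_R hprod hbrk hv hres j k m n il).
- exact (tame_trivial_T hprod hbrk hv hres j l n ik km im).
Qed.
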